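(* Let $\mathscr{A}$ be a $C^*$-algebra with identity such that the set $\mathscr{A}'_m$ of all linear multiplicative functionals $\varphi\colon\mathscr{A}\to\mathbb{C}$ is total (i.e., if $\varphi(a)=0$ for all $\varphi\in\mathscr{A}'_m$ then $a=0$). Let $\mathscr{X}$ be a right $\mathscr{A}$-module which is also a normed space. Let $E, F\colon \mathscr{X}^2\to\mathscr{A}$ be multi-$\mathscr{A}$-linear functions, and assume that $E$ is bounded and strong. Then the following are equivalent: (i) for all $x,y\in\mathscr{X}$, $E(x,y)=0$ implies $F(x,y)=0$; (ii) there exists $c\in\mathscr{A}$ such that $F(x,y)=cE(x,y)$ for all $x,y\in\mathscr{X}$. Moreover, each of these conditions implies that $F$ is bounded.
   Context: A right $\mathscr{A}$-module $\mathscr{X}$ is a complex vector space with a right $\mathscr{A}$-action satisfying $(\alpha x)a=x(\alpha a)=\alpha(xa)$. A function $F\colon\mathscr{X}^n\to\mathscr{A}$ is multi-$\mathscr{A}$-linear if for all $x_1,\dots,x_n,y_j\in\mathscr{X}$, $\alpha\in\mathbb{C}$, $a\in\mathscr{A}$ and $j=1,\dots,n$: (A) $F$ is additive in the $j$-th variable; (B) $F(x_1,\dots,\alpha x_j a,\dots,x_n)=\alpha F(x_1,\dots,x_n)a$ if $j$ is even; (C) $F(x_1,\dots,\alpha x_j a,\dots,x_n)=\overline{\alpha}a^*F(x_1,\dots,x_n)$ if $j$ is odd. $F$ is bounded if there is $M$ with $\|F(x_1,\dots,x_n)\|\le M\|x_1\|\cdots\|x_n\|$ for all $x_i$. With $G_{\mathscr{A}}$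 the set of invertible elements of $\mathscr{A}$, $F$ is strong if there exists $w\in\mathscr{X}$ with $F(w,w,\dots,w)\in G_{\mathscr{A}}$. *)

From HB Require Import structures.
From mathcomp Require Import all_boot all_order all_algebra.
From mathcomp Require Import reals.
From mathcomp Require Import complex.
Set Implicit Arguments. Unset Strict Implicit. Unset Printing Implicit Defensive.
Import Order.TTheory GRing.Theory Num.Theory.
Local Open Scope ring_scope.
Local Open Scope complex_scope.

Section Defs.
Variable R : realType.
Local Notation C := (R[i]).

Record normed_space_axioms (V : lmodType C) (nrm : V -> R) : Prop := {
  ns_ge0 : forall v, 0 <= nrm v;
  ns_eq0 : forall v, nrm v = 0 -> v = 0;
  ns_triangle : forall v w, nrm (v + w) <= nrm v + nrm w;
  ns_scale : forall (al : C) v, (nrm (al *: v))%:C = `|al| * (nrm v)%:C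
}.

Definition complete_wrt (V : lmodType C) (nrm : V -> R) : Prop :=
  forall u : nat -> V,
    (forall e : R, 0 < e -> exists N : nat, forall m n : nat,
        (N <= m)%N -> (N <= n)%N -> nrm (u m - u n) < e) ->
    exists l : V, forall e : R, 0 < e -> exists N : nat, forall n : nat,
        (N <= n)%N -> nrm (u n - l) < e.

Record Cstar_algebra_axioms (A : algType C) (nrm : A -> R) (star : A -> A) : Prop := {
  cs_normed : normed_space_axioms nrm;
  cs_complete : complete_wrt nrm;
  cs_submult : forall a b, nrm (a * b) <= nrm a * nrm b;
  cs_starD : forall a b, star (a + b) = star a + star b;
  cs_starZ : forall (al : C) a, star (al *: a) = (al^*)%R *: star a;
  cs_starM : forall a b, star (a * b) = star b * star a;
  cs_starK : forall a, star (star a) = a;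
  cs_Cstar : forall a, nrm (star a * a) = nrm a ^+ 2
}.

Definition lin_mult_functional (A : algType C) (phi : A -> C) : Prop :=
  [/\ forall a b, phi (a + b) = phi a + phi b,
      forall (al : C) a, phi (al *: a) = al * phi a
    & forall a b, phi (a * b) = phi a * phi b].

Definition mult_functionals_total (A : algType C) : Prop :=
  forall a : A, (forall phi : A -> C, lin_mult_functional phi -> phi a = 0) -> a = 0.

Record right_module_axioms (A : algType C) (X : lmodType C) (ract : X -> A -> X) : Prop := {
  rm_addl : forall x y a, ract (x + y) a = ract x a + ract y a;
  rm_addr : forall x a b, ract x (a + b) = ract x a + ract x b;
  rm_mul : forall x a b, ract x (a * b) = ract (ract x a) b;
  rm_one : forall x, ract x 1 = x;
  rm_scalel : forall (al : C) x a, ract (al *: x) a = al *: ract x a;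
  rm_scaler : forall (al : C) x a, ract x (al *: a) = al *: ract x a
}.

(* Multi-A-linearity for n = 2 (variable 1 odd, variable 2 even). *)
Definition multiAlinear2 (A : algType C) (X : lmodType C) (ract : X -> A -> X)
    (star : A -> A) (F : X -> X -> A) : Prop :=
  [/\ forall x x' y, F (x + x') y = F x y + F x' y,
      forall x y y', F x (y + y') = F x y + F x y',
      forall (al : C) (a : A) x y, F (ract (al *: x) a) y = (al^*)%R *: (star a * F x y)
    & forall (al : C) (a : A) x y, F x (ract (al *: y) a) = al *: (F x y * a)].

Definition bounded2 (A : algType C) (X : lmodType C) (nA : A -> R) (nX : X -> R)
    (F : X -> X -> A) : Prop :=
  exists M : R, forall x y, nA (F x y) <= M * nX x * nX y.

Definition invertible (A : algType C) (a : A) : Prop :=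
  exists b : A, a * b = 1 /\ b * a = 1.

Definition strong2 (A : algType C) (X : lmodType C) (F : X -> X -> A) : Prop :=
  exists w : X, invertible (F w w).

End Defs.

From HB Require Import structures.
From mathcomp Require Import all_boot all_order all_algebra.
From mathcomp Require Import reals.
From mathcomp Require Import complex.
Set Implicit Arguments. Unset Strict Implicit. Unset Printing Implicit Defensive.
Import Order.TTheory GRing.Theory Num.Theory.
Local Open Scope ring_scope.

(* Totality of the multiplicative functionals forces A to be commutative.
   Put c := E(w,w)^-1 F(w,w) and D := F - cE. Then D is again
   A-sesquilinear, vanishes on the kernel of E and at (w,w). Subtracting a
   suitable multiple of w from either argument moves any pair into the kernel
   of E, first in the form (x,w), then (z,y) with E(z,w) = 1, and finally an
   arbitrary (x,y) is a difference of such pairs; hence D = 0. Boundedness of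
   F = cE is then immediate from submultiplicativity. *)

Lemma mult_functionals_total_comm (R : realType) (A : algType R[i]) :
  mult_functionals_total A -> commutative (@GRing.mul A).
Proof.
move=> Htot a b; apply/eqP; rewrite -subr_eq0; apply/eqP.
apply: Htot => phi [phiD phiZ phiM].
have phiN u : phi (- u) = - phi u by rewrite -scaleN1r phiZ mulN1r.
by rewrite phiD phiN !phiM mulrC subrr.
Qed.

Lemma bounded2_mull (R : realType) (A : algType R[i]) (X : lmodType R[i])
    (nA : A -> R) (nX : X -> R) (c : A) (E F : X -> X -> A) :
  (forall a, 0 <= nA a) -> (forall a b, nA (a * b) <= nA a * nA b) ->
  bounded2 nA nX E -> (forall x y, F x y = c * E x y) -> bounded2 nA nX F.
Proof.
move=> nA_ge0 nA_submult [M HM] FE; exists (nA c * M) => x y.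
rewrite FE; apply: le_trans (nA_submult _ _) _.
by rewrite -!mulrA ler_wpM2l // mulrA.
Qed.

Section Sesquilinear.
Variables (R : realType) (A : algType R[i]) (X : lmodType R[i]).
Variables (ract : X -> A -> X) (star : A -> A).

Definition Asesquilinear (F : X -> X -> A) : Prop :=
  [/\ forall x x' y, F (x + x') y = F x y + F x' y,
      forall x y y', F x (y + y') = F x y + F x y',
      forall a x y, F (ract x a) y = star a * F x y
    & forall a x y, F x (ract y a) = F x y * a].

Lemma multiAlinear2_Asesquilinear F :
  multiAlinear2 ract star F -> Asesquilinear F.
Proof.
move=> [FDl FDr FZl FZr]; split=> // a x y.
- by have := FZl 1 a x y; rewrite scale1r conjC1 scale1r.
- by have := FZr 1 a x y; rewrite !scale1r.
Qed.

Lemma Asesquilinear_subl F x x' y :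
  Asesquilinear F -> F (x - x') y = F x y - F x' y.
Proof. by move=> [FDl _ _ _]; rewrite -[in RHS](subrK x' x) (FDl (x - x')) addrK. Qed.

Lemma Asesquilinear_subr F x y y' :
  Asesquilinear F -> F x (y - y') = F x y - F x y'.
Proof. by move=> [_ FDr _ _]; rewrite -[in RHS](subrK y' y) (FDr x (y - y')) addrK. Qed.

Lemma Asesquilinear_subMl (c : A) F E :
  commutative (@GRing.mul A) -> Asesquilinear F -> Asesquilinear E ->
  Asesquilinear (fun x y => F x y - c * E x y).
Proof.
move=> mulC [FDl FDr FZl FZr] [EDl EDr EZl EZr]; split=> [x x' y|x y y'|a x y|a x y].
- by rewrite FDl EDl mulrDr opprD addrACA.
- by rewrite FDr EDr mulrDr opprD addrACA.
- by rewrite FZl EZl mulrBr mulrA (mulC c) -mulrA.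
- by rewrite FZr EZr mulrBl mulrA.
Qed.

Section Vanishing.
Variables (D E : X -> X -> A) (w : X) (ei : A).
Hypothesis starK : involutive star.
Hypothesis D_sesq : Asesquilinear D.
Hypothesis E_sesq : Asesquilinear E.
Hypothesis kerE_kerD : forall x y, E x y = 0 -> D x y = 0.
Hypothesis eiK : ei * E w w = 1.
Hypothesis Dww : D w w = 0.

Lemma Asesquilinear_eq0_col x : D x w = 0.
Proof.
have [DDl _ DZl _] := D_sesq; have [_ _ EZl _] := E_sesq.
set r := ract w (star (E x w * ei)).
have Exr : E (x - r) w = 0.
  by rewrite Asesquilinear_subl // EZl starK -mulrA eiK mulr1 subrr.
by rewrite -(subrK r x) DDl kerE_kerD // DZl Dww mulr0 add0r.
Qed.

Lemma Asesquilinear_eq0_row z y : E z w = 1 -> D z y = 0.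
Proof.
move=> Ezw; have [_ DDr _ DZr] := D_sesq; have [_ _ _ EZr] := E_sesq.
set r := ract w (E z y).
have Ezr : E z (y - r) = 0 by rewrite Asesquilinear_subr // EZr Ezw mul1r subrr.
by rewrite -(subrK r y) DDr kerE_kerD // DZr Asesquilinear_eq0_col mul0r add0r.
Qed.

Lemma Asesquilinear_eq0 x y : D x y = 0.
Proof.
have [_ _ DZl _] := D_sesq; have [EDl _ EZl _] := E_sesq.
set z := ract w (star ei); set v := star (1 - E x w).
have Ezw : E z w = 1 by rewrite EZl starK.
have Exzw : E (x + ract z v) w = 1 by rewrite EDl EZl starK Ezw mulr1 addrC subrK.
rewrite -(addrK (ract z v) x) Asesquilinear_subl // DZl.
by rewrite !Asesquilinear_eq0_row // mulr0 subrr.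
Qed.

End Vanishing.
End Sesquilinear.

Theorem theorem3p5 (R : realType) (A : algType R[i]) (nA : A -> R) (star : A -> A)
  (X : lmodType R[i]) (nX : X -> R) (ract : X -> A -> X) (E F : X -> X -> A) :
  Cstar_algebra_axioms nA star ->
  mult_functionals_total A ->
  right_module_axioms ract ->
  normed_space_axioms nX ->
  multiAlinear2 ract star E ->
  multiAlinear2 ract star F ->
  bounded2 nA nX E ->
  strong2 E ->
  ((forall x y, E x y = 0 -> F x y = 0) <->
     (exists c : A, forall x y, F x y = c * E x y))
  /\ ((forall x y, E x y = 0 -> F x y = 0) -> bounded2 nA nX F)
  /\ ((exists c : A, forall x y, F x y = c * E x y) -> bounded2 nA nX F).
Proof.
move=> HC Htot _ _ /multiAlinear2_Asesquilinear E_sesq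
  /multiAlinear2_Asesquilinear F_sesq E_bnd [w [ei [_ eiK]]].
have mulC := mult_functionals_total_comm Htot.
have F_bnd (c : A) : (forall x y, F x y = c * E x y) -> bounded2 nA nX F.
  apply: bounded2_mull E_bnd.
  - exact: ns_ge0 (cs_normed HC).
  - exact: cs_submult HC.
have ker_mull : (forall x y, E x y = 0 -> F x y = 0) ->
    exists c : A, forall x y, F x y = c * E x y.
  move=> kerEF; exists (ei * F w w) => x y; apply/eqP; rewrite -subr_eq0; apply/eqP.
  pose D x y := F x y - ei * F w w * E x y.
  have D_sesq : Asesquilinear ract star D by exact: Asesquilinear_subMl.
  have kerE_kerD x' y' : E x' y' = 0 -> D x' y' = 0.
    by move=> Exy; rewrite /D Exy (kerEF _ _ Exy) mulr0 subrr.
  have Dww : D w w = 0 by rewrite /D -mulrA (mulC (F w w)) mulrA eiK mul1r subrr.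
  exact: (Asesquilinear_eq0 (cs_starK HC) D_sesq E_sesq kerE_kerD eiK Dww x y).
split; [split|split].
- exact: ker_mull.
- by move=> [c Hc] x y Exy; rewrite Hc Exy mulr0.
- by move/ker_mull => [c]; apply: F_bnd.
- by move=> [c]; apply: F_bnd.
Qed.
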